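(* Let $n\geq2$, let $q\in\mathbb{C}$ with $|q|>1$, fix $q^{1/2}$, and let $a_1,\ldots,a_n,b_1,\ldots,b_n$ be nonzero complex parameters with $\prod_{j=1}^n a_j=q^{(n-1)/2}$. Let $x_j(t),y_j(t)$ $(j=1,\ldots,n)$ be functions satisfying the system $q$-$P_{(n,n)}$: \[\begin{split} x_j(t)-x_{j-1}(t)&=\frac{a_jx_j(qt)}{1+x_j(qt)y_{j-1}(t)}-\frac{b_{j-1}x_{j-1}(qt)}{1+x_{j-1}(qt)y_{j-1}(t)},\\ y_j(qt)-y_{j-1}(qt)&=\frac{b_jy_j(t)}{1+x_j(qt)y_j(t)}-\frac{a_jy_{j-1}(t)}{1+x_j(qt)y_{j-1}(t)}, \end{split}\qquad (j=1,\ldots,n),\] where $b_0=q^{-1}b_n$, $x_0(t)=tx_n(t)$, $y_0(t)=q^{-1}t^{-1}y_n(t)$ (as functions of $t$), together with the relation \[ \prod_{j=1}^{n}a_j\frac{1+x_j(qt)y_j(t)}{1+x_j(qt)y_{j-1}(t)}=q^{(n-1)/2}, \] and suppose moreover that $y_j(t)=0$ for all $j=1,\ldots,n$. Then the vector $\mathbf{x}(t)={}^t[x_1(t),\ldots,x_n(t)]$ satisfies the linear $q$-difference system \[ \mathbf{x}(q^{-1}t)=\left(A_0+\frac{A_1}{1-q^{-1}t}\right)\mathbf{x}(t), \] where \[ A_0=\sum_{j=1}^{n}b_jE_{j,j}+\sum_{i=1}^{n}\sum_{j=i+1}^{n}(b_j-a_j)E_{i,j},\qquad A_1=\sum_{i=1}^{n}\sum_{j=1}^{n}(a_j-b_j)E_{i,j}.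 \]
   Context: $E_{i,j}$ denotes the $n\times n$ matrix unit with $1$ in the $(i,j)$ entry and zeros elsewhere. All denominators are assumed nonzero. *)

From HB Require Import structures.
From mathcomp Require Import all_boot all_order all_algebra.
From mathcomp.real_closed Require Import complex.
From mathcomp Require Import reals.
Set Implicit Arguments. Unset Strict Implicit. Unset Printing Implicit Defensive.
Import Order.TTheory GRing.Theory Num.Theory.
Local Open Scope ring_scope.

(* Complex numbers are R[i] for R : realType. Indices j = 1..n are nat;
   index 0 is handled by the boundary conventions below. *)

Definition bext (C : fieldType) (n : nat) (q : C) (b : nat -> C) (j : nat) : C :=
  if j == 0%N then q^-1 * b n else b j.

Definition xext (C : fieldType) (n : nat) (x : nat -> C -> C) (j : nat) (t : C) : C :=
  if j == 0%N then t * x n t else x j t.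

Definition yext (C : fieldType) (n : nat) (q : C) (y : nat -> C -> C) (j : nat) (t : C) : C :=
  if j == 0%N then q^-1 * t^-1 * y n t else y j t.

(* The system q-P_(n,n) at the point t (equations for j = 1..n) together with
   the product relation; s is the fixed square root q^{1/2}. *)
Definition qPnn (C : fieldType) (n : nat) (q s : C) (a b : nat -> C)
    (x y : nat -> C -> C) (t : C) : Prop :=
  (forall j : nat, (1 <= j <= n)%N ->
     xext n x j t - xext n x j.-1 t =
       a j * x j (q * t) / (1 + x j (q * t) * yext n q y j.-1 t)
       - bext n q b j.-1 * xext n x j.-1 (q * t)
           / (1 + xext n x j.-1 (q * t) * yext n q y j.-1 t)) /\
  (forall j : nat, (1 <= j <= n)%N ->
     yext n q y j (q * t) - yext n q y j.-1 (q * t) =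
       b j * y j t / (1 + x j (q * t) * y j t)
       - a j * yext n q y j.-1 t / (1 + x j (q * t) * yext n q y j.-1 t)) /\
  \prod_(1 <= j < n.+1) (a j * ((1 + x j (q * t) * y j t)
                               / (1 + x j (q * t) * yext n q y j.-1 t)))
    = s ^+ n.-1.

(* E_{i,j} is delta_mx; matrix index i : 'I_n stands for i+1. *)
Definition A0 (C : fieldType) (n : nat) (a b : nat -> C) : 'M[C]_n :=
  \sum_(j < n) b j.+1 *: delta_mx j j
  + \sum_(i < n) \sum_(j < n | (i < j)%N) (b j.+1 - a j.+1) *: delta_mx i j.

Definition A1 (C : fieldType) (n : nat) (a b : nat -> C) : 'M[C]_n :=
  \sum_(i < n) \sum_(j < n) (a j.+1 - b j.+1) *: delta_mx i j.

Definition xvec (C : fieldType) (n : nat) (x : nat -> C -> C) (t : C) : 'cV[C]_n :=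
  \col_(i < n) x i.+1 t.

From HB Require Import structures.
From mathcomp Require Import all_boot all_order all_algebra.
From mathcomp.real_closed Require Import complex.
From mathcomp Require Import reals ring.
Set Implicit Arguments. Unset Strict Implicit. Unset Printing Implicit Defensive.
Import Order.TTheory GRing.Theory Num.Theory.
Local Open Scope ring_scope.
Local Open Scope complex_scope.

(* With y = 0 the system q-P_(n,n) degenerates into the linear cyclic
   recurrence x_j(t) - x_{j-1}(t) = a_j x_j(qt) - b_{j-1} x_{j-1}(qt) with the
   twisted boundary x_0(t) = t x_n(t).  Shifting t to q^{-1}t, the quantity
   D_i = x_i(q^{-1}t) - b_i x_i(t) - sum_{k>i} (b_k - a_k) x_k(t) does not depend
   on i, and the boundary condition pins it down to
   -(1 - q^{-1}t)^{-1} sum_k (b_k - a_k) x_k(t); solving for x_i(q^{-1}t) gives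
   the i-th row of the linear system. *)

Section CyclicRecurrence.

Variables (C : fieldType) (m : nat) (u : C) (alpha beta U V : nat -> C).

Hypothesis U_succ : forall k, (k < m)%N ->
  U k.+1 - U k = alpha k.+1 * V k.+1 - beta k * V k.
Hypothesis U_boundary : U 0%N - u * U m = alpha 0%N * V 0%N - u * (beta m * V m).
Hypothesis u_neq1 : 1 - u != 0.

Lemma cyclic_recurrence_solution (i : nat) : (i <= m)%N ->
  U i = beta i * V i + \sum_(i.+1 <= k < m.+1) (beta k - alpha k) * V k
        - (1 - u)^-1 * \sum_(0 <= k < m.+1) (beta k - alpha k) * V k.
Proof.
move=> le_im.
pose G i := \sum_(i <= k < m.+1) (beta k - alpha k) * V k.
have G_step k : (k <= m)%N -> G k = (beta k - alpha k) * V k + G k.+1.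
  by move=> le_km; rewrite /G big_ltn.
pose D i := U i - beta i * V i - G i.+1.
have D_succ k : (k < m)%N -> D k.+1 = D k.
  move=> lt_km; rewrite /D (G_step k.+1 lt_km).
  by rewrite -[U k.+1](subrK (U k)) U_succ //; ring.
have D_const k : (k <= m)%N -> D k = D 0%N.
  by elim: k => [//|k IHk] lt_km; rewrite D_succ // IHk // ltnW.
have D0E : (1 - u) * D 0%N = - G 0%N.
  have Gm : G m.+1 = 0 by rewrite /G big_geq.
  rewrite mulrBl mul1r -{2}(D_const m) // /D Gm (G_step 0%N) //.
  have -> : U 0%N = alpha 0%N * V 0%N - u * (beta m * V m) + u * U m.
    by rewrite -U_boundary subrK.
  ring.
have -> : U i = beta i * V i + G i.+1 + D i by rewrite /D; ring.
have D0 : D 0%N = - ((1 - u)^-1 * G 0%N) by rewrite -mulrN -D0E mulKf.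
by rewrite D_const // D0 /G; ring.
Qed.

End CyclicRecurrence.

Section CoefficientMatrices.

Variables (C : fieldType) (n : nat) (a b : nat -> C).

Lemma A0E : A0 n a b =
  diag_mx (\row_j b j.+1) + \matrix_(i, j) (if (i < j)%N then b j.+1 - a j.+1 else 0).
Proof.
rewrite /A0 diag_mx_sum_delta; congr (_ + _).
  by apply: eq_bigr => j _; rewrite mxE.
rewrite [RHS]matrix_sum_delta; apply: eq_bigr => i _; rewrite big_mkcond; apply: eq_bigr => j _.
by rewrite mxE; case: ifP; rewrite ?scale0r.
Qed.

Lemma A1E : A1 n a b = \matrix_(i, j) (a j.+1 - b j.+1).
Proof.
by rewrite [RHS]matrix_sum_delta; do 2!apply: eq_bigr => ? _; rewrite mxE.
Qed.

Lemma mulmx_A0_A1 (c : C) (v : 'cV[C]_n) (i : 'I_n) :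
  ((A0 n a b + c *: A1 n a b) *m v) i 0 =
    b i.+1 * v i 0 + \sum_(j < n | (i < j)%N) (b j.+1 - a j.+1) * v j 0
    - c * \sum_(j < n) (b j.+1 - a j.+1) * v j 0.
Proof.
rewrite A0E A1E !mulmxDl mul_diag_mx -scalemxAl !mxE [in RHS]big_mkcond.
rewrite -mulrN -sumrN; congr (_ + _ + _ * _); apply: eq_bigr => j _; rewrite !mxE.
  by case: ifP; rewrite ?mul0r.
by rewrite -mulNr opprB.
Qed.

End CoefficientMatrices.

Lemma qPnn_y0_recurrence (C : fieldType) (n : nat) (q s : C) (a b : nat -> C)
    (x y : nat -> C -> C) (t : C) :
  (forall j, (1 <= j <= n)%N -> y j t = 0) ->
  qPnn n q s a b x y t ->
  forall j, (1 <= j <= n)%N ->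
    xext n x j t - xext n x j.-1 t =
      a j * x j (q * t) - bext n q b j.-1 * xext n x j.-1 (q * t).
Proof.
move=> y0 [x_eqn _] j /andP[j_gt0 le_jn].
have yext0 : yext n q y j.-1 t = 0.
  rewrite /yext; case: eqP => [_|/eqP j1_neq0].
    by rewrite y0 ?mulr0 // (leq_trans j_gt0 le_jn) leqnn.
  by rewrite y0 // lt0n j1_neq0 (leq_trans (leq_pred j) le_jn).
by rewrite x_eqn ?j_gt0 // yext0 !mulr0 !addr0 !divr1.
Qed.

Lemma xvec_qshift (C : fieldType) (m : nat) (q : C) (a b : nat -> C)
    (x : nat -> C -> C) (t : C) :
  1 - q^-1 * t != 0 ->
  (forall j, (1 <= j <= m.+1)%N ->
     xext m.+1 x j (q^-1 * t) - xext m.+1 x j.-1 (q^-1 * t) =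
       a j * x j t - bext m.+1 q b j.-1 * xext m.+1 x j.-1 t) ->
  xvec m.+1 x (q^-1 * t) =
    (A0 m.+1 a b + (1 - q^-1 * t)^-1 *: A1 m.+1 a b) *m xvec m.+1 x t.
Proof.
move=> u_neq1 x_rec; apply/matrixP => i j0; rewrite ord1 mulmx_A0_A1 !mxE.
rewrite (@cyclic_recurrence_solution _ m (q^-1 * t) (fun k => a k.+1)
  (fun k => b k.+1) (fun k => x k.+1 (q^-1 * t)) (fun k => x k.+1 t)) //.
- rewrite big_geq_mkord big_mkord.
  by congr (_ + _ - _ * _); apply: eq_bigr => j _; rewrite mxE.
- by move=> j lt_jm; exact: (x_rec j.+2).
- by have := x_rec 1%N; rewrite /xext /bext /= => -> //; ring.
- exact: ltn_ord i.
Qed.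

Theorem mainTheorem3 (R : realType) (n : nat) (q s : R[i]) (a b : nat -> R[i])
    (x y : nat -> R[i] -> R[i]) :
  (2 <= n)%N ->
  1 < `|q| ->
  s ^+ 2 = q ->
  (forall j, (1 <= j <= n)%N -> a j != 0) ->
  (forall j, (1 <= j <= n)%N -> b j != 0) ->
  \prod_(1 <= j < n.+1) a j = s ^+ n.-1 ->
  (forall t : R[i], t != 0 -> qPnn n q s a b x y t) ->
  (forall j t, (1 <= j <= n)%N -> y j t = 0) ->
  forall t : R[i], t != 0 -> 1 - q^-1 * t != 0 ->
    xvec n x (q^-1 * t) = (A0 n a b + (1 - q^-1 * t)^-1 *: A1 n a b) *m xvec n x t.
Proof.
move=> n_ge2 q_gt1 _ _ _ _ qPnn_sol y0 t t_neq0 u_neq1.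
have q_neq0 : q != 0 by apply: contraTneq q_gt1 => ->; rewrite normr0 ltr10.
case: n n_ge2 qPnn_sol y0 => [//|m] _ qPnn_sol y0.
apply: xvec_qshift => // j j_range.
have t'_neq0 : q^-1 * t != 0 by rewrite mulf_neq0 ?invr_eq0.
have := qPnn_y0_recurrence (fun k => y0 k _) (qPnn_sol _ t'_neq0) j_range.
by rewrite mulrA mulfV // mul1r.
Qed.
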